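(* Suppose the random walk $R$ is irreducible, aperiodic, positive recurrent and has negative drift. For $i=1,\dots,M$ let $r_i$ satisfy $$1<r_i<\inf_{n\in S:\, i\in I(n)}\frac{s^-_i(n)}{s^+_i(n)}$$ (such $r_i$ exist, i.e. the infimum is finite and strictly greater than $1$). Let $\varepsilon^*=\min_{n\in S,\, i\in I(n)}\{s^+_i(n)(1-r_i)+s^-_i(n)(1-r_i^{-1})\}$ (then $\varepsilon^*>0$). Let $v_0\ge1$, $v_1,\dots,v_M>0$, $0<\varepsilon<\varepsilon^*$, and define $$V(n)=v_0+\sum_{i=1}^M v_i r_i^{n_i},\qquad b=\varepsilon v_0+\sum_{i=1}^M v_i\Big(\sup_{n\in S}s^+_i(n)\,(r_i-1)+\varepsilon\Big),$$ $$B=\Big\{n\in S:\ n_i\le \max\Big\{\tfrac{\log(b/v_i)-\log(\varepsilon^*-\varepsilon)}{\log r_i},\,1\Big\}\ \ \forall i=1,\dots,M\Big\}.$$ Then $V:S\to[1,\infty)$, $B$ is finite, $b>0$, and for all $n\in S$, $$\sum_{u\in N_{c(n)}}p_{c(n),u}V(n+u)-V(n)\le-\varepsilon V(n)+b\,\mathbf 1_B(n),$$ i.e. $R$ is geometrically ergodic with these $V,\varepsilon,b,B$.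
   Context: Let $M\ge 1$ and $S=\{0,1,2,\dots\}^M$. For $n\in S$ let $N(n)=\{u\in\{-1,0,1\}^M: n+u\in S\}$. A partition $C=\{C_k\}_{k\in K}$ ($K$ finite) of $S$ is a family of pairwise disjoint sets covering $S$ such that $N(n)=N(n')$ whenever $n,n'$ lie in the same $C_k$; write $N_k$ for this common set and $c(n)$ for the index $k$ with $n\in C_k$. The random walk $R$ is a discrete-time Markov chain on $S$ with transition probabilities $P(n,n+u)=p_{c(n),u}\ge0$ for $u\in N_{c(n)}$, $P(n,m)=0$ if $m-n\notin N_{c(n)}$, and $\sum_{u\in N_k}p_{k,u}=1$ for every $k$. For $n\in S$, $I(n)=\{i\in\{1,\dots,M\}: n_i>0\}$, $s^+_i(n)=\sum_{u\in N_{c(n)}:u_i=1}p_{c(n),u}$ and $s^-_i(n)=\sum_{u\in N_{c(n)}:u_i=-1}p_{c(n),u}$ (a ratio $s^-_i(n)/s^+_i(n)$ with $s^+_i(n)=0$ is interpreted as $+\infty$). $R$ has negative drift if $\sup_{n\in S,\,i\in I(n)}\{s^+_i(n)-s^-_i(n)\}<0$. *)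

From Stdlib Require Import Reals Lra Lia ZArith Arith List.
Import ListNotations.
Open Scope R_scope.

(* States of S = {0,1,2,...}^M and displacements are lists of integers of
   length M; coordinate i (paper: i+1) is [nth i n 0]. *)

Fixpoint vadd (n u : list Z) : list Z :=
  match n, u with
  | a :: n', b :: u' => (a + b)%Z :: vadd n' u'
  | _, _ => []
  end.

Definition inSb (M : nat) (z : list Z) : bool :=
  Nat.eqb (length z) M && forallb (fun x => Z.leb 0 x) z.
Definition inS (M : nat) (z : list Z) : Prop := inSb M z = true.

Fixpoint disps (m : nat) : list (list Z) :=
  match m with
  | O => [ [] ]
  | S m' => flat_map (fun u => [ (-1)%Z :: u; 0%Z :: u; 1%Z :: u ]) (disps m')
  end.

Definition lsum {A : Type} (f : A -> R) (l : list A) : R :=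
  fold_right (fun a acc => f a + acc) 0 l.

(* Sum over u in N(n) = { u in {-1,0,1}^M : n + u in S } of g u. *)
Definition sumN (M : nat) (n : list Z) (g : list Z -> R) : R :=
  lsum (fun u => if inSb M (vadd n u) then g u else 0) (disps M).

(* I(n): i (0-based, i < M) with n_i > 0. *)
Definition inI (M : nat) (n : list Z) (i : nat) : Prop :=
  (i < M)%nat /\ (0 < nth i n 0%Z)%Z.

Definition splus {K : Type} (M : nat) (c : list Z -> K) (p : K -> list Z -> R)
  (i : nat) (n : list Z) : R :=
  sumN M n (fun u => if Z.eqb (nth i u 0%Z) 1 then p (c n) u else 0).
Definition sminus {K : Type} (M : nat) (c : list Z -> K) (p : K -> list Z -> R)
  (i : nat) (n : list Z) : R :=
  sumN M n (fun u => if Z.eqb (nth i u 0%Z) (-1) then p (c n) u else 0).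

(* c is the index map of a partition {C_k} of S (C_k = c^-1(k) ∩ S), K finite,
   and N(n) = N(n') whenever c n = c n'. *)
Definition is_partition (M : nat) {K : Type} (c : list Z -> K) : Prop :=
  (exists lK : list K, forall k, In k lK) /\
  (forall n n', inS M n -> inS M n' -> c n = c n' ->
     forall u, In u (disps M) -> (inS M (vadd n u) <-> inS M (vadd n' u))).

Definition is_transition (M : nat) {K : Type} (c : list Z -> K)
  (p : K -> list Z -> R) : Prop :=
  (forall n u, inS M n -> In u (disps M) -> inS M (vadd n u) -> 0 <= p (c n) u) /\
  (forall n, inS M n -> sumN M n (fun u => p (c n) u) = 1).

Fixpoint Pk (M : nat) {K : Type} (c : list Z -> K) (p : K -> list Z -> R)
  (k : nat) (n m : list Z) : R :=
  match k with
  | O => if list_eq_dec Z.eq_dec n m then 1 else 0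
  | S k' => sumN M n (fun u => p (c n) u * Pk M c p k' (vadd n u) m)
  end.

(* First-passage probabilities f^(k)(n,m): probability that the walk started
   at n visits m for the first time at time k >= 1. *)
Fixpoint Fk (M : nat) {K : Type} (c : list Z -> K) (p : K -> list Z -> R)
  (k : nat) (n m : list Z) : R :=
  match k with
  | O => 0
  | S k' => sumN M n (fun u => p (c n) u *
             (if list_eq_dec Z.eq_dec (vadd n u) m
              then (match k' with O => 1 | _ => 0 end)
              else Fk M c p k' (vadd n u) m))
  end.

Definition irreducible (M : nat) {K : Type} (c : list Z -> K) (p : K -> list Z -> R) : Prop :=
  forall n m, inS M n -> inS M m -> exists k, 0 < Pk M c p k n m.

Definition aperiodic (M : nat) {K : Type} (c : list Z -> K) (p : K -> list Z -> R) : Prop :=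
  forall n, inS M n -> forall d : nat,
    (forall k, (0 < k)%nat -> 0 < Pk M c p k n n -> Nat.divide d k) -> d = 1%nat.

Definition positive_recurrent (M : nat) {K : Type} (c : list Z -> K)
  (p : K -> list Z -> R) : Prop :=
  forall n, inS M n ->
    infinite_sum (fun k => Fk M c p k n n) 1 /\
    exists mu, infinite_sum (fun k => INR k * Fk M c p k n n) mu.

Definition negative_drift (M : nat) {K : Type} (c : list Z -> K) (p : K -> list Z -> R) : Prop :=
  exists delta, 0 < delta /\
    forall n i, inS M n -> inI M n i -> splus M c p i n - sminus M c p i n <= - delta.

Definition Vfun (M : nat) (v0 : R) (v r : nat -> R) (n : list Z) : R :=
  v0 + lsum (fun i => v i * r i ^ Z.to_nat (nth i n 0%Z)) (seq 0 M).

(* b = eps v0 + sum_i v_i (sup_n s^+_i(n)(r_i - 1) + eps), where supp i is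
   that supremum *)
Definition bval (M : nat) (eps v0 : R) (v supp : nat -> R) : R :=
  eps * v0 + lsum (fun i => v i * (supp i + eps)) (seq 0 M).

Definition Bset (M : nat) (b epsS eps : R) (v r : nat -> R) (n : list Z) : Prop :=
  inS M n /\ forall i, (i < M)%nat ->
    IZR (nth i n 0%Z) <= Rmax ((ln (b / v i) - ln (epsS - eps)) / ln (r i)) 1.

From Stdlib Require Import Reals ZArith List Lra Lia Classical.
Import ListNotations.
Open Scope R_scope.

(* The whole proof rests on one exact identity (drift_identity): writing
   G_i(n) = s^+_i(n)(r_i - 1) + s^-_i(n)(r_i^{-1} - 1) for the growth factor
   of coordinate i,
       PV(n) - V(n) + eps V(n) = eps v0 + sum_i v_i r_i^{n_i} (G_i(n) + eps),
   obtained because one step changes r_i^{n_i} by the factor r_i, 1 or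
   r_i^{-1}.  Each summand is then bounded separately: on the boundary n_i = 0
   we have s^-_i(n) = 0 and the summand is at most v_i (sup s^+_i (r_i-1) + eps);
   in the interior n_i > 0 the choice of eps* gives G_i(n) <= -eps*, so the
   summand is at most -(eps* - eps) v_i r_i^{n_i} <= 0.  Summing gives the
   drift bound with constant b everywhere; outside B some coordinate is so
   large that its negative summand alone absorbs b (exceeds_log_threshold).
   Finiteness of B is a box-enumeration argument. *)

Lemma lsum_ext {A} (f g : A -> R) l :
  (forall a, In a l -> f a = g a) -> lsum f l = lsum g l.
Proof.
  induction l as [|a l IH]; simpl; intros H; [reflexivity|].
  rewrite H, IH by auto; reflexivity.
Qed.

Lemma lsum_le {A} (f g : A -> R) l :
  (forall a, In a l -> f a <= g a) -> lsum f l <= lsum g l.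
Proof.
  induction l as [|a l IH]; simpl; intros H; [lra|].
  pose proof (H a (or_introl eq_refl)).
  pose proof (IH (fun x h => H x (or_intror h))). lra.
Qed.

Lemma lsum_zero {A} (l : list A) : lsum (fun _ => 0) l = 0.
Proof. induction l as [|a l IH]; simpl; [reflexivity|]. rewrite IH; ring. Qed.

Lemma lsum_nonneg {A} (f : A -> R) l :
  (forall a, In a l -> 0 <= f a) -> 0 <= lsum f l.
Proof. intros H. rewrite <- (lsum_zero l). now apply lsum_le. Qed.

Lemma lsum_plus {A} (f g : A -> R) l :
  lsum (fun a => f a + g a) l = lsum f l + lsum g l.
Proof. induction l as [|a l IH]; simpl; [ring|]. rewrite IH; ring. Qed.

Lemma lsum_scal {A} (k : R) (f : A -> R) l :
  lsum (fun a => k * f a) l = k * lsum f l.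
Proof. induction l as [|a l IH]; simpl; [ring|]. rewrite IH; ring. Qed.

Lemma lsum_swap {A B} (h : A -> B -> R) (l1 : list A) (l2 : list B) :
  lsum (fun a => lsum (fun b => h a b) l2) l1 = lsum (fun b => lsum (fun a => h a b) l1) l2.
Proof.
  induction l1 as [|a l1 IH]; simpl.
  - now rewrite lsum_zero.
  - now rewrite IH, <- lsum_plus.
Qed.

(* A termwise bound that is improved by d >= 0 at one index improves the
   bound on the sum by d; this is how a single large coordinate absorbs b. *)
Lemma lsum_le_gap {A} (f g : A -> R) l i d :
  In i l -> 0 <= d -> (forall a, In a l -> f a <= g a) -> f i <= g i - d ->
  lsum f l <= lsum g l - d.
Proof.
  induction l as [|a l IH]; simpl; intros Hi Hd H Hfi; [contradiction|].
  pose proof (H a (or_introl eq_refl)) as Ha.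
  pose proof (fun x h => H x (or_intror h)) as Hl.
  destruct Hi as [<-|Hi].
  - pose proof (lsum_le f g l Hl). lra.
  - pose proof (IH Hi Hd Hl Hfi). lra.
Qed.

Lemma vadd_nth n u i : (i < length n)%nat -> (i < length u)%nat ->
  nth i (vadd n u) 0%Z = (nth i n 0 + nth i u 0)%Z.
Proof.
  revert u i; induction n as [|a n IH]; intros [|b u] [|i] Hn Hu; simpl in *;
    try lia; auto.
  apply IH; lia.
Qed.

Lemma disps_spec m u : In u (disps m) -> length u = m /\
  forall i, (nth i u 0 = -1 \/ nth i u 0 = 0 \/ nth i u 0 = 1)%Z.
Proof.
  revert u; induction m as [|m IH]; simpl; intros u H.
  - destruct H as [<-|[]]. split; [reflexivity|]. intros [|i]; simpl; auto.
  - apply in_flat_map in H as [w [Hw H]]. destruct (IH w Hw) as [Hl Hn].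
    simpl in H. destruct H as [<-|[<-|[<-|[]]]];
      (split; [simpl; lia|]); intros [|i]; simpl; auto.
Qed.

Lemma inS_spec M z : inS M z -> length z = M /\ forall i, (0 <= nth i z 0)%Z.
Proof.
  unfold inS, inSb. intros H. apply andb_prop in H as [Hl Hall].
  apply Nat.eqb_eq in Hl. split; [exact Hl|]. intros i.
  destruct (Nat.lt_ge_cases i (length z)) as [Hi|Hi].
  - rewrite forallb_forall in Hall. apply Z.leb_le, Hall, nth_In, Hi.
  - rewrite nth_overflow; lia.
Qed.

Lemma sumN_ext M n (f g : list Z -> R) :
  (forall u, In u (disps M) -> inS M (vadd n u) -> f u = g u) ->
  sumN M n f = sumN M n g.
Proof.
  intros H. unfold sumN. apply lsum_ext. intros u Hu.
  destruct (inSb M (vadd n u)) eqn:E; [apply H|]; auto.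
Qed.

Lemma sumN_plus M n (f g : list Z -> R) :
  sumN M n (fun u => f u + g u) = sumN M n f + sumN M n g.
Proof.
  unfold sumN. rewrite <- lsum_plus. apply lsum_ext. intros u _.
  destruct (inSb M (vadd n u)); ring.
Qed.

Lemma sumN_scal M n (k : R) (f : list Z -> R) :
  sumN M n (fun u => k * f u) = k * sumN M n f.
Proof.
  unfold sumN. rewrite <- lsum_scal. apply lsum_ext. intros u _.
  destruct (inSb M (vadd n u)); ring.
Qed.

Lemma sumN_lsum {A} M n (h : A -> list Z -> R) l :
  sumN M n (fun u => lsum (fun a => h a u) l) = lsum (fun a => sumN M n (h a)) l.
Proof.
  unfold sumN. rewrite <- lsum_swap. apply lsum_ext. intros u _.
  destruct (inSb M (vadd n u)); [reflexivity|]. now rewrite lsum_zero.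
Qed.

Lemma integer_bound (t : nat -> R) m :
  exists N : Z, (0 <= N)%Z /\ forall i, (i < m)%nat -> t i <= IZR N.
Proof.
  induction m as [|m [N [HN Ht]]].
  - exists 0%Z. split; [lia|]. intros; lia.
  - destruct (archimed (t m)) as [Hup _].
    exists (Z.max N (up (t m))). split; [lia|]. intros i Hi.
    destruct (Nat.eq_dec i m) as [->|Hne].
    + apply Rle_trans with (IZR (up (t m))); [lra|]. apply IZR_le; lia.
    + apply Rle_trans with (IZR N); [apply Ht; lia|]. apply IZR_le; lia.
Qed.

Fixpoint box (m N : nat) : list (list Z) :=
  match m with
  | O => [ [] ]
  | S m' => flat_map (fun x => map (cons x) (box m' N)) (map Z.of_nat (seq 0 (S N)))
  end.

Lemma in_box N z :
  (forall i, (i < length z)%nat -> (0 <= nth i z 0 <= Z.of_nat N)%Z) ->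
  In z (box (length z) N).
Proof.
  induction z as [|a z IH]; intros H; [now left|].
  cbn [length box]. apply in_flat_map. exists a. split.
  - pose proof (H 0%nat ltac:(simpl; lia)) as Ha. simpl in Ha.
    apply in_map_iff. exists (Z.to_nat a). split; [lia|]. apply in_seq. lia.
  - apply in_map, IH. intros i Hi. apply (H (S i)). simpl; lia.
Qed.

Lemma bounded_states_finite M (t : nat -> R) :
  exists L : list (list Z), forall n, inS M n ->
    (forall i, (i < M)%nat -> IZR (nth i n 0%Z) <= t i) -> In n L.
Proof.
  destruct (integer_bound t M) as [N [HN Ht]].
  exists (box M (Z.to_nat N)). intros n Hn Hle.
  destruct (inS_spec M n Hn) as [Hl Hnn]. rewrite <- Hl. apply in_box.
  intros i Hi. split; [apply Hnn|]. rewrite Z2Nat.id by lia.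
  apply le_IZR. apply Rle_trans with (t i); [apply Hle | apply Ht]; lia.
Qed.

Lemma exceeds_some_threshold M (t : nat -> R) n :
  ~ (forall i, (i < M)%nat -> IZR (nth i n 0%Z) <= t i) ->
  exists i, (i < M)%nat /\ t i < IZR (nth i n 0%Z).
Proof.
  intros H. apply not_all_ex_not in H as [i Hi].
  apply imply_to_and in Hi as [Hi Hgt]. exists i. split; [exact Hi|].
  now apply Rnot_le_lt.
Qed.

(* The threshold defining B: if k exceeds (log(b/w) - log e) / log r, then
   e w r^k exceeds b. *)
Lemma exceeds_log_threshold (r b w e : R) (k : nat) :
  1 < r -> 0 < b -> 0 < w -> 0 < e ->
  (ln (b / w) - ln e) / ln r < INR k -> b < e * w * r ^ k.
Proof.
  intros Hr Hb Hw He Hk.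
  assert (Hlr : 0 < ln r) by (rewrite <- ln_1; apply ln_increasing; lra).
  assert (Hlog : ln (b / w) - ln e < INR k * ln r).
  { replace (ln (b / w) - ln e) with ((ln (b / w) - ln e) / ln r * ln r)
      by (field; lra).
    now apply Rmult_lt_compat_r. }
  assert (Hrk : 0 < r ^ k) by (apply pow_lt; lra).
  unfold Rdiv in Hlog.
  rewrite ln_mult, ln_Rinv in Hlog by (try apply Rinv_0_lt_compat; assumption).
  apply ln_lt_inv; [exact Hb | apply Rmult_lt_0_compat; [nra | exact Hrk] |].
  rewrite !ln_mult, ln_pow by (try apply Rmult_lt_0_compat; lra). lra.
Qed.

(* Growth factor of coordinate i: the expected relative change of r_i^{n_i}
   in one step, minus one. *)
Definition growth (M : nat) {K : Type} (c : list Z -> K) (p : K -> list Z -> R)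
  (r : nat -> R) (i : nat) (n : list Z) : R :=
  splus M c p i n * (r i - 1) + sminus M c p i n * (/ r i - 1).

Definition coord_weight (v r : nat -> R) (n : list Z) (i : nat) : R :=
  v i * r i ^ Z.to_nat (nth i n 0%Z).

(* One step d in {-1, 0, 1} from x >= 0 multiplies rho^x by rho, 1 or
   rho^{-1}; written with indicator summands matching s^+ and s^-. *)
Lemma pow_shift (rho q : R) (x d : Z) :
  0 < rho -> (0 <= x)%Z -> (0 <= x + d)%Z -> (d = -1 \/ d = 0 \/ d = 1)%Z ->
  q * rho ^ Z.to_nat (x + d) =
  rho ^ Z.to_nat x * (q + (rho - 1) * (if Z.eqb d 1 then q else 0)
                        + (/ rho - 1) * (if Z.eqb d (-1) then q else 0)).
Proof.
  intros Hrho Hx Hxd [-> | [-> | ->]]; simpl Z.eqb; cbv iota.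
  - replace (Z.to_nat x) with (S (Z.to_nat (x + -1))) by lia. simpl. field. lra.
  - rewrite Z.add_0_r. ring.
  - replace (Z.to_nat (x + 1)) with (S (Z.to_nat x)) by lia. simpl. ring.
Qed.

Lemma sumN_Vfun M n (q : list Z -> R) v0 (v r : nat -> R) :
  sumN M n (fun u => q u * Vfun M v0 v r (vadd n u)) =
  v0 * sumN M n q +
  lsum (fun i => v i * sumN M n (fun u => q u * r i ^ Z.to_nat (nth i (vadd n u) 0%Z)))
       (seq 0 M).
Proof.
  rewrite (sumN_ext M n _ (fun u => v0 * q u +
    lsum (fun i => v i * (q u * r i ^ Z.to_nat (nth i (vadd n u) 0%Z))) (seq 0 M))).
  - rewrite sumN_plus, sumN_scal, sumN_lsum. f_equal.
    apply lsum_ext. intros i _. apply sumN_scal.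
  - intros u _ _. unfold Vfun. rewrite Rmult_plus_distr_l, <- lsum_scal.
    f_equal; [ring|]. apply lsum_ext. intros i _. ring.
Qed.

Lemma sumN_geometric M {K} (c : list Z -> K) p (rho : R) n i :
  inS M n -> (i < M)%nat -> 0 < rho ->
  sumN M n (fun u => p (c n) u * rho ^ Z.to_nat (nth i (vadd n u) 0%Z)) =
  rho ^ Z.to_nat (nth i n 0%Z) *
    (sumN M n (fun u => p (c n) u) + (rho - 1) * splus M c p i n
     + (/ rho - 1) * sminus M c p i n).
Proof.
  intros Hn Hi Hrho. unfold splus, sminus.
  rewrite (sumN_ext M n _ (fun u => rho ^ Z.to_nat (nth i n 0%Z) *
    (p (c n) u + (rho - 1) * (if Z.eqb (nth i u 0%Z) 1 then p (c n) u else 0)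
     + (/ rho - 1) * (if Z.eqb (nth i u 0%Z) (-1) then p (c n) u else 0)))).
  - now rewrite sumN_scal, !sumN_plus, !sumN_scal.
  - intros u Hu Hnu.
    destruct (disps_spec M u Hu) as [Hlu Hsteps].
    destruct (inS_spec M n Hn) as [Hln Hnn].
    destruct (inS_spec M _ Hnu) as [_ Hnun].
    specialize (Hnun i). rewrite vadd_nth in * by lia.
    now apply pow_shift.
Qed.

Lemma sminus_at_boundary M {K} (c : list Z -> K) p n i :
  inS M n -> (i < M)%nat -> nth i n 0%Z = 0%Z -> sminus M c p i n = 0.
Proof.
  intros Hn Hi H0. unfold sminus.
  rewrite (sumN_ext M n _ (fun u => 0 * p (c n) u)), sumN_scal; [ring|].
  intros u Hu Hnu.
  destruct (disps_spec M u Hu) as [Hlu _].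
  destruct (inS_spec M n Hn) as [Hln _].
  destruct (inS_spec M _ Hnu) as [_ Hnun].
  specialize (Hnun i). rewrite vadd_nth in Hnun by lia.
  destruct (Z.eqb_spec (nth i u 0%Z) (-1)); [lia | ring].
Qed.

Lemma splus_nonneg M {K} (c : list Z -> K) p i n :
  is_transition M c p -> inS M n -> 0 <= splus M c p i n.
Proof.
  intros [Hp _] Hn. unfold splus, sumN. apply lsum_nonneg. intros u Hu.
  destruct (inSb M (vadd n u)) eqn:E; [|lra].
  destruct (Z.eqb _ _); [now apply Hp | lra].
Qed.

Lemma drift_identity M {K} (c : list Z -> K) p (r v : nat -> R) v0 eps n :
  inS M n -> sumN M n (fun u => p (c n) u) = 1 ->
  (forall i, (i < M)%nat -> 0 < r i) ->
  sumN M n (fun u => p (c n) u * Vfun M v0 v r (vadd n u)) - Vfun M v0 v r n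
    + eps * Vfun M v0 v r n =
  eps * v0 + lsum (fun i => coord_weight v r n i * (growth M c p r i n + eps)) (seq 0 M).
Proof.
  intros Hn Hsum Hr.
  rewrite (sumN_Vfun M n (fun u => p (c n) u)), Hsum. cbv beta.
  rewrite (lsum_ext _ (fun i => coord_weight v r n i * (1 + growth M c p r i n))).
  2:{ intros i Hi. apply in_seq in Hi.
      rewrite sumN_geometric, Hsum by (auto; try apply Hr; lia).
      unfold coord_weight, growth. ring. }
  rewrite (lsum_ext (fun i => coord_weight v r n i * (growth M c p r i n + eps))
    (fun i => coord_weight v r n i * (1 + growth M c p r i n)
              + (eps - 1) * coord_weight v r n i)) by (intros; ring).
  rewrite lsum_plus, lsum_scal.
  change (Vfun M v0 v r n) with (v0 + lsum (coord_weight v r n) (seq 0 M)).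
  ring.
Qed.

Lemma origin_inS M : inS M (repeat 0%Z M).
Proof.
  unfold inS, inSb. rewrite repeat_length, Nat.eqb_refl. simpl.
  apply forallb_forall. intros x Hx. apply repeat_spec in Hx as ->. reflexivity.
Qed.

Section LyapunovBounds.

Variables (M : nat) (K : Type) (c : list Z -> K) (p : K -> list Z -> R).
Variables (r v supp : nat -> R) (v0 epsS eps : R).

Hypothesis Htrans : is_transition M c p.
Hypothesis Hr : forall i, (i < M)%nat -> 1 < r i.
Hypothesis Hv : forall i, (i < M)%nat -> 0 < v i.
Hypothesis Hsupp : forall i n, (i < M)%nat -> inS M n ->
  splus M c p i n * (r i - 1) <= supp i.
Hypothesis HepsS : forall n i, inS M n -> inI M n i ->
  epsS <= splus M c p i n * (1 - r i) + sminus M c p i n * (1 - / r i).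
Hypothesis Heps : 0 < eps.
Hypothesis Heps_lt : eps < epsS.
Hypothesis Hv0 : 1 <= v0.

Local Notation V := (Vfun M v0 v r).
Local Notation b := (bval M eps v0 v supp).
Local Notation PV n := (sumN M n (fun u => p (c n) u * V (vadd n u))).

Lemma coord_weight_pos n i : (i < M)%nat -> 0 < coord_weight v r n i.
Proof.
  intros Hi. unfold coord_weight. pose proof (Hr i Hi).
  apply Rmult_lt_0_compat; [now apply Hv | apply pow_lt; lra].
Qed.

Lemma V_ge_1 n : 1 <= V n.
Proof.
  change (V n) with (v0 + lsum (coord_weight v r n) (seq 0 M)).
  assert (0 <= lsum (coord_weight v r n) (seq 0 M)); [|lra].
  apply lsum_nonneg. intros i Hi. apply in_seq in Hi.
  apply Rlt_le, coord_weight_pos. lia.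
Qed.

(* sup_n s^+_i(n) (r_i - 1) >= 0, since S is nonempty and r_i > 1. *)
Lemma supp_nonneg i : (i < M)%nat -> 0 <= supp i.
Proof.
  intros Hi. pose proof (Hsupp i _ Hi (origin_inS M)).
  pose proof (splus_nonneg M c p i _ Htrans (origin_inS M)).
  pose proof (Hr i Hi). nra.
Qed.

Lemma b_pos : 0 < b.
Proof.
  unfold bval.
  assert (0 <= lsum (fun i => v i * (supp i + eps)) (seq 0 M)); [|nra].
  apply lsum_nonneg. intros i Hi. apply in_seq in Hi.
  pose proof (Hv i ltac:(lia)). pose proof (supp_nonneg i ltac:(lia)). nra.
Qed.

Lemma coord_term_interior n i : inS M n -> inI M n i ->
  coord_weight v r n i * (growth M c p r i n + eps)
    <= - (epsS - eps) * coord_weight v r n i.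
Proof.
  intros Hn HI. pose proof (HepsS n i Hn HI).
  pose proof (coord_weight_pos n i (proj1 HI)).
  assert (growth M c p r i n + eps <= - (epsS - eps)) by (unfold growth; lra).
  nra.
Qed.

(* Every coordinate contributes at most v_i (supp_i + eps): on the boundary
   because s^-_i vanishes, in the interior because the contribution is <= 0. *)
Lemma coord_term_le n i : inS M n -> (i < M)%nat ->
  coord_weight v r n i * (growth M c p r i n + eps) <= v i * (supp i + eps).
Proof.
  intros Hn Hi. pose proof (Hv i Hi). pose proof (supp_nonneg i Hi).
  destruct (Z.eq_dec (nth i n 0%Z) 0) as [Hzero|Hpos].
  - unfold coord_weight, growth.
    rewrite Hzero, (sminus_at_boundary M c p n i Hn Hi Hzero). simpl.
    pose proof (Hsupp i n Hi Hn). nra.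
  - assert (HI : inI M n i).
    { split; [exact Hi|]. pose proof (proj2 (inS_spec M n Hn) i). lia. }
    pose proof (coord_term_interior n i Hn HI).
    pose proof (coord_weight_pos n i Hi). nra.
Qed.

Lemma drift_rewrite n : inS M n ->
  PV n - V n + eps * V n =
  eps * v0 + lsum (fun i => coord_weight v r n i * (growth M c p r i n + eps)) (seq 0 M).
Proof.
  intros Hn. apply drift_identity; [exact Hn | now apply Htrans |].
  intros i Hi. pose proof (Hr i Hi). lra.
Qed.

Lemma drift_le_b n : inS M n -> PV n - V n <= - eps * V n + b.
Proof.
  intros Hn. pose proof (drift_rewrite n Hn).
  assert (lsum (fun i => coord_weight v r n i * (growth M c p r i n + eps)) (seq 0 M)
          <= lsum (fun i => v i * (supp i + eps)) (seq 0 M)).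
  { apply lsum_le. intros i Hi. apply in_seq in Hi. apply coord_term_le; [exact Hn | lia]. }
  unfold bval. lra.
Qed.

Lemma drift_large_coordinate n i : inS M n -> inI M n i ->
  b < (epsS - eps) * coord_weight v r n i -> PV n - V n <= - eps * V n.
Proof.
  intros Hn HI Hbig. pose proof (drift_rewrite n Hn).
  set (g := fun j => v j * (supp j + eps)).
  assert (Hg : 0 <= g i)
    by (unfold g; pose proof (Hv i (proj1 HI)); pose proof (supp_nonneg i (proj1 HI)); nra).
  pose proof (coord_term_interior n i Hn HI). pose proof b_pos.
  assert (lsum (fun j => coord_weight v r n j * (growth M c p r j n + eps)) (seq 0 M)
          <= lsum g (seq 0 M) - (g i + b)).
  { apply (lsum_le_gap _ _ _ i); [apply in_seq; split; [lia | apply (proj1 HI)] | lra | | lra].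
    intros j Hj. apply in_seq in Hj. apply coord_term_le; [exact Hn | lia]. }
  assert (b = eps * v0 + lsum g (seq 0 M)) by reflexivity.
  lra.
Qed.

End LyapunovBounds.

Lemma Bset_finite M b epsS eps (v r : nat -> R) :
  exists L : list (list Z), forall n, Bset M b epsS eps v r n -> In n L.
Proof.
  destruct (bounded_states_finite M
    (fun i => Rmax ((ln (b / v i) - ln (epsS - eps)) / ln (r i)) 1)) as [L HL].
  exists L. intros n [Hn HB]. now apply HL.
Qed.

Lemma outside_B_large_coordinate M b epsS eps (v r : nat -> R) n :
  0 < b -> eps < epsS ->
  (forall i, (i < M)%nat -> 1 < r i) -> (forall i, (i < M)%nat -> 0 < v i) ->
  inS M n -> ~ Bset M b epsS eps v r n ->
  exists i, inI M n i /\ b < (epsS - eps) * coord_weight v r n i.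
Proof.
  intros Hb Heps Hr Hv Hn HnB.
  set (t := fun i => Rmax ((ln (b / v i) - ln (epsS - eps)) / ln (r i)) 1).
  destruct (exceeds_some_threshold M t n) as [i [Hi Hgt]].
  { intros Hle. apply HnB. split; assumption. }
  pose proof (Rmax_l ((ln (b / v i) - ln (epsS - eps)) / ln (r i)) 1).
  pose proof (Rmax_r ((ln (b / v i) - ln (epsS - eps)) / ln (r i)) 1).
  unfold t in Hgt.
  assert (Hni : (0 < nth i n 0)%Z) by (apply lt_IZR; lra).
  exists i. split; [split; assumption|].
  unfold coord_weight. rewrite <- Rmult_assoc.
  apply exceeds_log_threshold; try lra; [apply Hr | apply Hv |]; try exact Hi.
  rewrite INR_IZR_INZ, Z2Nat.id by lia. lra.
Qed.

(* The drift inequality itself uses only the transition structure and the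
   choice of r, eps*, sup s^+ and eps; irreducibility, aperiodicity, positive
   recurrence and negative drift are the standing assumptions of the setting. *)
Theorem lemma4p2 (M : nat) (K : Type) (c : list Z -> K) (p : K -> list Z -> R)
  (r : nat -> R) (epsS : R) (supp : nat -> R) (v0 : R) (v : nat -> R) (eps : R) :
  (1 <= M)%nat ->
  is_partition M c ->
  is_transition M c p ->
  irreducible M c p ->
  aperiodic M c p ->
  positive_recurrent M c p ->
  negative_drift M c p ->
  (forall i, (i < M)%nat ->
     1 < r i /\
     exists delta, 0 < delta /\
       forall n, inS M n -> inI M n i -> 0 < splus M c p i n ->
         r i + delta <= sminus M c p i n / splus M c p i n) ->
  (exists n i, inS M n /\ inI M n i /\
     epsS = splus M c p i n * (1 - r i) + sminus M c p i n * (1 - / r i)) ->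
  (forall n i, inS M n -> inI M n i ->
     epsS <= splus M c p i n * (1 - r i) + sminus M c p i n * (1 - / r i)) ->
  (forall i, (i < M)%nat ->
     is_lub (fun x => exists n, inS M n /\ x = splus M c p i n * (r i - 1)) (supp i)) ->
  1 <= v0 ->
  (forall i, (i < M)%nat -> 0 < v i) ->
  0 < eps -> eps < epsS ->
  let V := Vfun M v0 v r in
  let b := bval M eps v0 v supp in
  let B := Bset M b epsS eps v r in
  (forall n, inS M n -> 1 <= V n) /\
  (exists L : list (list Z), forall n, B n -> In n L) /\
  0 < b /\
  0 < epsS /\
  (forall n, inS M n ->
     (B n -> sumN M n (fun u => p (c n) u * V (vadd n u)) - V n <= - eps * V n + b) /\
     (~ B n -> sumN M n (fun u => p (c n) u * V (vadd n u)) - V n <= - eps * V n)).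
Proof.
  intros _ _ Htrans _ _ _ _ Hr _ HepsS Hsup Hv0 Hv Heps Heps_lt V b B.
  assert (Hr1 : forall i, (i < M)%nat -> 1 < r i) by (intros i Hi; apply (Hr i Hi)).
  assert (Hsupp : forall i n, (i < M)%nat -> inS M n ->
            splus M c p i n * (r i - 1) <= supp i)
    by (intros i n Hi Hn; apply (proj1 (Hsup i Hi)); exists n; auto).
  assert (Hb : 0 < b) by (eapply b_pos; eauto).
  split; [intros n _; eapply V_ge_1; eauto |].
  split; [apply Bset_finite |].
  split; [exact Hb |]. split; [lra |].
  intros n Hn. split.
  - intros _. eapply drift_le_b; eauto.
  - intros HnB.
    destruct (outside_B_large_coordinate M b epsS eps v r n) as [i [HI Hbig]]; auto.
    eapply drift_large_coordinate; eauto.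
Qed.
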